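(* Let $(b,c)$ be a locally finite, connected graph over a countable set $X$ on which $\mathbb{Z}^d$ acts freely and cocompactly with fundamental domain $V$ (so every $x\in X$ is uniquely $x=zv$, $z\in\mathbb{Z}^d$, $v\in V$), such that $H_{b,c}$ is $\mathbb{Z}^d$-invariant; fix $x_0\in X$. For $\alpha\in\mathbb{R}^d$ let $Q_\alpha$ be the $V\times V$ matrix with $(Q_\alpha)_{v,w}=\sum_{z\in\mathbb{Z}^d}b(v,zw)e^{\langle\alpha,z\rangle}$ for $v\neq w$ and $(Q_\alpha)_{v,v}=\sum_{z\in\mathbb{Z}^d}b(v,zv)e^{\langle\alpha,z\rangle}+\max_{w\in V}\deg(w)-\deg(v)$; it is nonnegative and irreducible, with Perron–Frobenius eigenvalue $\theta(\alpha)$ and positive Perron–Frobenius eigenvector $\varphi_\alpha$. Then the map $\rho:\mathcal{M}_\mathbb{R}\to\mathbb{R}^d$ is bijective, with inverse $\rho^{-1}(\alpha)(zv)=e^{\langle\alpha,z\rangle}\varphi_\alpha(v)$ ($z\in\mathbb{Z}^d$, $v\in V$), where $\varphi_\alpha$ is normalised so that this function equals $1$ at $x_0$. Moreover, $\rho^{-1}(\alpha)\in\mathcal{M}_\lambda$ with $\lambda=\max_{v\in V}\deg(v)-\theta(\alpha)$.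
   Context: A graph over $X$ is $(b,c)$ with $b:X\times X\to[0,\infty)$, $c:X\to\mathbb{R}$, $\sum_yb(x,y)<\infty$ ($b$ need not be symmetric); locally finite and connected as usual ($x\sim y$ iff $b(x,y)>0$). $\deg(x)=\sum_yb(x,y)+c(x)$. $H_{b,c}f(x)=\sum_yb(x,y)(f(x)-f(y))+c(x)f(x)$ on $\mathrm{Dom}(H)=\{f:\sum_yb(x,y)|f(y)|<\infty\ \forall x\}$; $f$ is $\lambda$-harmonic if $(H-\lambda)f=0$. $T_gf(x)=f(g^{-1}x)$; $H$ is $\mathbb{Z}^d$-invariant if $T_g$ preserves $\mathrm{Dom}(H)$ and $HT_g=T_gH$. $f$ is multiplicative with character $\gamma_f$ if $\gamma_f:\mathbb{Z}^d\to(0,\infty)$ is a homomorphism with $f(zx)=\gamma_f(z)f(x)$. $\mathcal{K}_\lambda$ is the pointwise closure of $\{f\ge0,\ f\not\equiv0,\ \lambda\text{-harmonic},\ f(x_0)=1\}$, $\mathcal{M}_\lambda$ its multiplicative elements, $\mathcal{M}_\mathbb{R}=\bigcup_\lambda\mathcal{M}_\lambda$. $\rho(f)$ is the vector $\alpha\in\mathbb{R}^d$ with $\log\gamma_f(z)=\langle\alpha,z\rangle$ for all $z\in\mathbb{Z}^d$. *)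

From HB Require Import structures.
From mathcomp Require Import all_boot all_order all_algebra.
From mathcomp Require Import all_classical all_reals all_analysis.
Set Implicit Arguments. Unset Strict Implicit. Unset Printing Implicit Defensive.
Import Order.TTheory GRing.Theory Num.Theory.
Local Open Scope classical_set_scope.
Local Open Scope ring_scope.

Definition ip (R : realType) (d : nat) (a : 'rV[R]_d) (z : 'rV[int]_d) : R :=
  \sum_(i < d) a 0 i * (z 0 i)%:~R.

(* sum over all t : T (finitely supported sums, fsbigop); under local
   finiteness all sums used below have finite support. *)
Definition tsum (R : realType) (T : choiceType) (F : T -> R) : R :=
  \sum_(t \in [set: T]) F t.

Section Graph.
Context (R : realType) (X : countType).

Definition deg (b : X -> X -> R) (c : X -> R) (x : X) : R :=
  tsum (fun y => b x y) + c x.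

Definition Hop (b : X -> X -> R) (c : X -> R) (f : X -> R) (x : X) : R :=
  tsum (fun y => b x y * (f x - f y)) + c x * f x.

Definition locally_finite (b : X -> X -> R) : Prop :=
  forall x, finite_set [set y | 0 < b x y].

Definition graph_connected (b : X -> X -> R) : Prop :=
  forall x y, exists s : seq X, path (fun u w => 0 < b u w) x s && (last x s == y).

Definition harmonic (b : X -> X -> R) (c : X -> R) (lam : R) (f : X -> R) : Prop :=
  forall x, Hop b c f x - lam * f x = 0.

Definition pos_harm_norm (b : X -> X -> R) (c : X -> R) (x0 : X) (lam : R)
  (f : X -> R) : Prop :=
  [/\ (forall x, 0 <= f x), (exists x, f x != 0), harmonic b c lam f & f x0 = 1].

(* closure in the topology of pointwise convergence (product topology on R^X) *)
Definition pw_closure (S : (X -> R) -> Prop) (f : X -> R) : Prop :=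
  forall (F : seq X) (e : R), 0 < e ->
    exists g, S g /\ forall x, x \in F -> `|g x - f x| < e.

Definition Kset (b : X -> X -> R) (c : X -> R) (x0 : X) (lam : R) : (X -> R) -> Prop :=
  pw_closure (pos_harm_norm b c x0 lam).

Context (d : nat).

Definition is_action (act : 'rV[int]_d -> X -> X) : Prop :=
  (forall x, act 0 x = x) /\ (forall z1 z2 x, act (z1 + z2) x = act z1 (act z2 x)).

Definition transl (act : 'rV[int]_d -> X -> X) (g : 'rV[int]_d) (f : X -> R) : X -> R :=
  fun x => f (act (- g) x).

Definition H_invariant (b : X -> X -> R) (c : X -> R) (act : 'rV[int]_d -> X -> X) : Prop :=
  forall g f x, Hop b c (transl act g f) x = transl act g (Hop b c f) x.

Definition is_character (gam : 'rV[int]_d -> R) : Prop :=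
  (forall z, 0 < gam z) /\ (forall z1 z2, gam (z1 + z2) = gam z1 * gam z2).

Definition multiplicative_with (act : 'rV[int]_d -> X -> X) (f : X -> R)
  (gam : 'rV[int]_d -> R) : Prop :=
  is_character gam /\ forall z x, f (act z x) = gam z * f x.

Definition Mset (b : X -> X -> R) (c : X -> R) (act : 'rV[int]_d -> X -> X) (x0 : X)
  (lam : R) (f : X -> R) : Prop :=
  Kset b c x0 lam f /\ exists gam, multiplicative_with act f gam.

Definition MRset (b : X -> X -> R) (c : X -> R) (act : 'rV[int]_d -> X -> X) (x0 : X)
  (f : X -> R) : Prop :=
  exists lam, Mset b c act x0 lam f.

Definition rho_is (act : 'rV[int]_d -> X -> X) (f : X -> R) (a : 'rV[R]_d) : Prop :=
  exists gam, multiplicative_with act f gam /\ forall z, ln (gam z) = ip a z.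

Context (V : finType).

Definition maxdeg (b : X -> X -> R) (c : X -> R) (iota : V -> X) : R :=
  let s := [seq deg b c (iota w) | w <- enum V] in
  \big[Num.max/head 0 s]_(t <- s) t.

Definition Qmat (b : X -> X -> R) (c : X -> R) (act : 'rV[int]_d -> X -> X)
  (iota : V -> X) (a : 'rV[R]_d) (v w : V) : R :=
  tsum (fun z : 'rV[int]_d => b (iota v) (act z (iota w)) * expR (ip a z))
  + (if v == w then maxdeg b c iota - deg b c (iota v) else 0).

End Graph.

Section Matrix.
Context (R : realType) (V : finType).

Definition mulv (Q : V -> V -> R) (u : V -> R) (v : V) : R := \sum_(w : V) Q v w * u w.

(* a + i b is an eigenvalue of Q, with complex eigenvector u + i w *)
Definition complex_eigenvalue (Q : V -> V -> R) (a bb : R) : Prop :=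
  exists u w : V -> R, (exists v, (u v != 0) || (w v != 0)) /\
    forall v, mulv Q u v = a * u v - bb * w v /\ mulv Q w v = bb * u v + a * w v.

Definition PF_eigenvalue (Q : V -> V -> R) (th : R) : Prop :=
  [/\ 0 <= th, complex_eigenvalue Q th 0 &
      forall a bb, complex_eigenvalue Q a bb -> a ^+ 2 + bb ^+ 2 <= th ^+ 2].

Definition PF_eigenvector (Q : V -> V -> R) (th : R) (phi : V -> R) : Prop :=
  (forall v, 0 < phi v) /\ forall v, mulv Q phi v = th * phi v.

End Matrix.

(* The profile psi = f \o iota of a multiplicative function f with character
   exp <a, .> determines f, and lam-harmonicity of f is exactly the eigenvalue
   equation Q_a psi = (max deg - lam) psi: grouping the neighbours z w of v by
   their class w produces the entries of Q_a.  Pointwise limits of positive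
   harmonic functions stay positive and harmonic by local finiteness, so the
   elements of M_lam are such functions.  As the graph is connected, Q_a is
   irreducible, and Perron-Frobenius says its positive eigenvectors are the
   multiples of the Perron vector, with eigenvalue theta(a).  Normalising at x0
   then makes rho a bijection.  Perron-Frobenius is proved from the
   Collatz-Wielandt value sup {t | t x <= Q x, x in the simplex}: it is attained
   by compactness, and (I + Q)^|V| turns a maximiser into a positive
   eigenvector; comparing with moduli bounds every complex eigenvalue. *)

From Pilot Require Import Defs.
From HB Require Import structures.
From mathcomp Require Import all_boot all_order all_algebra.
From mathcomp Require Import all_classical all_reals all_analysis.
From mathcomp Require Import ring lra zify.
Import Order.TTheory GRing.Theory Num.Theory.
Import numFieldNormedType.Exports ArrowAsProduct.
Local Open Scope classical_set_scope.
Local Open Scope ring_scope.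
Set Implicit Arguments. Unset Strict Implicit. Unset Printing Implicit Defensive.

Lemma ler_sum_term (R : numDomainType) (I : finType) (F : I -> R) i :
  (forall j, 0 <= F j) -> F i <= \sum_j F j.
Proof. by move=> F0; rewrite (bigD1 i) //= lerDl sumr_ge0. Qed.

Section EuclideanNorm2.
Context (R : rcfType).
Implicit Types a b c d k : R.

Definition norm2 a b : R := Num.sqrt (a ^+ 2 + b ^+ 2).

Lemma norm2_ge0 a b : 0 <= norm2 a b.
Proof. exact: sqrtr_ge0. Qed.

Lemma sqr_norm2 a b : norm2 a b ^+ 2 = a ^+ 2 + b ^+ 2.
Proof. by rewrite sqr_sqrtr // addr_ge0 ?sqr_ge0. Qed.

Lemma norm2_eq0 a b : (norm2 a b == 0) = (a == 0) && (b == 0).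
Proof.
rewrite sqrtr_eq0 -[a == 0]sqrf_eq0 -[b == 0]sqrf_eq0 -paddr_eq0 ?sqr_ge0 //.
by rewrite eq_le addr_ge0 ?sqr_ge0 // andbT.
Qed.

Lemma norm2M k a b : norm2 (k * a) (k * b) = `|k| * norm2 a b.
Proof. by rewrite /norm2 !exprMn -mulrDr sqrtrM ?sqr_ge0 // sqrtr_sqr. Qed.

Lemma norm2_rotation a b c d :
  norm2 (a * c - b * d) (b * c + a * d) = norm2 a b * norm2 c d.
Proof.
rewrite /norm2 -sqrtrM ?addr_ge0 ?sqr_ge0 //; congr Num.sqrt; ring.
Qed.

Lemma norm2D a b c d : norm2 (a + c) (b + d) <= norm2 a b + norm2 c d.
Proof.
have cs : a * c + b * d <= norm2 a b * norm2 c d.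
  have -> : norm2 a b = norm2 a (- b) by rewrite /norm2 sqrrN.
  rewrite -norm2_rotation; apply: le_trans (ler_norm _) _.
  rewrite -sqrtr_sqr ler_sqrt ?addr_ge0 ?sqr_ge0 // mulNr opprK lerDl.
  exact: sqr_ge0.
rewrite -ler_sqr ?nnegrE ?addr_ge0 ?norm2_ge0 // sqrrD !sqr_norm2.
have -> : (a + c) ^+ 2 + (b + d) ^+ 2 =
    a ^+ 2 + b ^+ 2 + (a * c + b * d) *+ 2 + (c ^+ 2 + d ^+ 2) by ring.
by rewrite lerD2r lerD2l ler_pMn2r.
Qed.

Lemma norm2_sum (I : finType) (F G : I -> R) :
  norm2 (\sum_i F i) (\sum_i G i) <= \sum_i norm2 (F i) (G i).
Proof.
elim/big_rec3: _ => [|i x y z _ IH]; first by rewrite /norm2 expr0n /= addr0 sqrtr0.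
by apply: le_trans (norm2D _ _ _ _) _; rewrite lerD2l.
Qed.

End EuclideanNorm2.

Section ProductTopology.
Context (R : realType) (V : finType).

Lemma continuous_coord v : continuous (fun x : V -> R => x v).
Proof. exact: (@proj_continuous V (fun _ => R) v). Qed.

Lemma continuous_mulv (Q : V -> V -> R) v : continuous (fun x : V -> R => mulv Q x v).
Proof.
apply: (@continuous_big R V +%R 0 xpredT add_continuous (V -> R)) => w _ x.
by apply: continuousM; [exact: cst_continuous | exact: continuous_coord].
Qed.

Lemma continuous_sum : continuous (fun x : V -> R => \sum_w x w).
Proof.
apply: (@continuous_big R V +%R 0 xpredT add_continuous (V -> R)) => w _.
exact: continuous_coord.
Qed.

Lemma compact_unit_cube : compact [set x : V -> R | forall v, `[0, 1]%classic (x v)].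
Proof. exact: (tychonoff (fun _ => @segment_compact R 0 1)). Qed.

End ProductTopology.

Section ClosedSets.
Context (R : realType) (T : topologicalType).

Lemma closed_fun_le (f g : T -> R) : continuous f -> continuous g ->
  closed [set x | f x <= g x].
Proof.
move=> cf cg; have -> : [set x | f x <= g x] = (g - f) @^-1` [set r | 0 <= r].
  by apply/seteqP; split => x /=; rewrite !fctE subr_ge0.
apply: preimage_closed; last exact: closed_ge.
by move=> x _; apply: continuousB; [exact: cg | exact: cf].
Qed.

Lemma closed_fun_eq (f : T -> R) r : continuous f -> closed [set x | f x = r].
Proof.
by move=> cf; apply: (preimage_closed (f := f) (D := [set y | y = r])).
Qed.

Lemma closed_forall (I : Type) (P : I -> set T) : (forall i, closed (P i)) ->
  closed [set x | forall i, P i x].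
Proof.
move=> cP; have -> : [set x | forall i, P i x] = \bigcap_(i in [set: I]) P i.
  by apply/seteqP; split => x /= Px i //; apply: Px.
by apply: closed_bigI => i _; exact: cP.
Qed.

Lemma compact_nested_meet (K : set T) (C : R -> set T) :
  compact K -> (forall e, 0 < e -> C e !=set0) ->
  (forall e e', 0 < e -> e <= e' -> C e `<=` C e') ->
  (forall e, 0 < e -> C e `<=` K) -> (forall e, 0 < e -> closed (C e)) ->
  exists p, forall e, 0 < e -> C e p.
Proof.
move=> cK ne mono sub cl.
pose F := filter_from [set e : R | 0 < e] C.
have FF : Filter F.
  apply: filter_from_filter; first by exists 1; rewrite /= ltr01.
  move=> i j i0 j0; exists (Num.min i j); first by rewrite /= lt_min i0 j0.
  by move=> x Cx; split; apply: (mono (Num.min i j));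
    rewrite ?lt_min ?i0 ?j0 ?ge_min ?lexx ?orbT.
have PF : ProperFilter F by apply: filter_from_proper.
have [p [_ clp]] := cK F PF (ex_intro2 _ _ 1 ltr01 (sub 1 ltr01)).
exists p => e e0; apply: (cl e e0).
by rewrite clusterE in clp; apply: clp; exists e.
Qed.

End ClosedSets.

Definition irreducible (R : realType) (V : finType) (Q : V -> V -> R) : Prop :=
  forall (S : pred V) v w, S v -> ~~ S w ->
    exists u u', [/\ S u, ~~ S u' & 0 < Q u u'].

Section PerronFrobenius.
Context (R : realType) (V : finType) (Q : V -> V -> R).
Hypotheses (Q_ge0 : forall u v, 0 <= Q u v) (Q_irr : irreducible Q).
(* Only witnesses that [V] is nonempty: otherwise [cw_set] is empty and every [t]
   is an eigenvalue. *)
Variable v0 : V.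
Implicit Types (x y m phi psi : V -> R) (s t mu : R).

Lemma mulv_ge0 x v : (forall w, 0 <= x w) -> 0 <= mulv Q x v.
Proof. by move=> x0; rewrite sumr_ge0 // => w _; rewrite mulr_ge0. Qed.

Lemma mulvD x y v : mulv Q (fun w => x w + y w) v = mulv Q x v + mulv Q y v.
Proof. by rewrite /mulv -big_split; apply: eq_bigr => w _; rewrite mulrDr. Qed.

Lemma mulvZ s x v : mulv Q (fun w => s * x w) v = s * mulv Q x v.
Proof. by rewrite /mulv mulr_sumr; apply: eq_bigr => w _; rewrite mulrCA. Qed.

Lemma mulvB x y s v :
  mulv Q (fun w => x w - s * y w) v = mulv Q x v - s * mulv Q y v.
Proof. by rewrite /mulv mulr_sumr -sumrB; apply: eq_bigr => w _; ring. Qed.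

Lemma eigenvector_gt0 x mu : (forall v, 0 <= x v) -> (exists v, x v != 0) ->
  (forall v, mulv Q x v = mu * x v) -> forall v, 0 < x v.
Proof.
move=> x0 [w xw] ex v; rewrite lt0r x0 andbT; apply/negP => xv0.
have [u [u' [/eqP xu xu' Quu']]] := @Q_irr [pred v | x v == 0] v w xv0 xw.
have : 0 < mulv Q x u.
  apply: lt_le_trans _ (ler_sum_term (F := fun z => Q u z * x z) u' _); last first.
    by move=> z; rewrite mulr_ge0.
  by rewrite mulr_gt0 // lt0r xu' x0.
by rewrite ex xu mulr0 ltxx.
Qed.

Lemma subeigenvalue_le m s phi t :
  (forall v, 0 <= m v) -> (exists v, m v != 0) -> (forall v, s * m v <= mulv Q m v) ->
  (forall v, 0 < phi v) -> (forall v, mulv Q phi v = t * phi v) -> s <= t.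
Proof.
move=> m0 [v mv] sm phi0 ephi.
have [v1 _ v1max] := @arg_maxP _ _ _ v xpredT (fun w => m w / phi w) isT.
set k := m v1 / phi v1 in v1max.
have mk w : m w <= k * phi w by rewrite -ler_pdivrMr //; apply: v1max.
have k0 : 0 < k by apply: lt_le_trans _ (v1max v isT); rewrite divr_gt0 // lt0r mv m0.
have mv1 : m v1 = k * phi v1 by rewrite /k divfK // gt_eqF.
have : s * m v1 <= t * m v1.
  apply: le_trans (sm v1) _; rewrite mv1 mulrCA -ephi -mulvZ.
  by apply: ler_sum => w _; rewrite ler_wpM2l.
by rewrite ler_pM2r // mv1 mulr_gt0.
Qed.

Lemma positive_eigenvector_unique phi t psi mu :
  (forall v, 0 < phi v) -> (forall v, mulv Q phi v = t * phi v) ->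
  (forall v, 0 < psi v) -> (forall v, mulv Q psi v = mu * psi v) ->
  mu = t /\ exists2 k, 0 < k & forall v, psi v = k * phi v.
Proof.
move=> phi0 ephi psi0 epsi.
have sub_eig m s : (forall v, 0 < m v) -> (forall v, mulv Q m v = s * m v) ->
    [/\ forall v, 0 <= m v, exists v, m v != 0 & forall v, s * m v <= mulv Q m v].
  move=> m0 em; split=> [v||v]; [exact: ltW | by exists v0; rewrite gt_eqF | by rewrite em].
have mut : mu = t.
  have [psi_ge0 psi_nz psi_sub] := sub_eig _ _ psi0 epsi.
  have [phi_ge0 phi_nz phi_sub] := sub_eig _ _ phi0 ephi.
  apply/eqP; rewrite eq_le (subeigenvalue_le psi_ge0 psi_nz psi_sub phi0 ephi).
  by rewrite (subeigenvalue_le phi_ge0 phi_nz phi_sub psi0 epsi).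
split=> //; subst mu.
have [v1 _ v1min] := @arg_minP _ _ _ v0 xpredT (fun w => psi w / phi w) isT.
set k := psi v1 / phi v1 in v1min.
exists k; first by rewrite divr_gt0.
have u0 w : 0 <= psi w - k * phi w by rewrite subr_ge0 -ler_pdivlMr //; apply: v1min.
have eu w : mulv Q (fun w => psi w - k * phi w) w = t * (psi w - k * phi w).
  by rewrite mulvB epsi ephi; ring.
have uv1 : psi v1 - k * phi v1 = 0 by rewrite /k divfK ?subrr // gt_eqF.
move=> v; apply/eqP; rewrite -subr_eq0; apply/negPn/negP => nz.
by have := eigenvector_gt0 u0 (ex_intro _ v nz) eu v1; rewrite uv1 ltxx.
Qed.

Lemma complex_eigenvalue_le phi t a bb :
  (forall v, 0 < phi v) -> (forall v, mulv Q phi v = t * phi v) ->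
  complex_eigenvalue Q a bb -> a ^+ 2 + bb ^+ 2 <= t ^+ 2.
Proof.
move=> phi0 ephi [u [w [[v nz] eig]]].
pose m i := norm2 (u i) (w i).
have le_t : norm2 a bb <= t.
  apply: (@subeigenvalue_le m _ phi) => // [i||i].
  - exact: norm2_ge0.
  - by exists v; rewrite norm2_eq0 negb_and.
  - have [eu ew] := eig i; rewrite /m -norm2_rotation -eu -ew.
    apply: le_trans (norm2_sum _ _) _; apply: ler_sum => y _.
    by rewrite norm2M ger0_norm.
have t0 : 0 <= t := le_trans (norm2_ge0 a bb) le_t.
by rewrite -sqr_norm2 ler_sqr ?nnegrE ?norm2_ge0.
Qed.

Definition simplex x := (forall v, 0 <= x v) /\ \sum_v x v = 1.

(* Collatz--Wielandt: the Perron root is the largest [t] such that [t x <= Q x]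
   for some nonzero [x >= 0]. *)
Definition cw_set := [set t | exists2 x, simplex x & forall v, t * x v <= mulv Q x v].
Definition pf_root := sup cw_set.

Lemma simplex_le1 x v : simplex x -> x v <= 1.
Proof. by case=> x0 <-; apply: ler_sum_term. Qed.

Lemma simplex_argmax_gt0 x v : simplex x -> (forall w, x w <= x v) -> 0 < x v.
Proof.
case=> x0 x1 xmax; rewrite lt0r x0 andbT; apply/negP => /eqP xv0.
have : \sum_w x w <= \sum_(w : V) x v by apply: ler_sum => w _; apply: xmax.
by rewrite x1 xv0 big1_eq ler10.
Qed.

Lemma cw_set_scale x t : (forall v, 0 <= x v) -> 0 < \sum_v x v ->
  (forall v, t * x v <= mulv Q x v) -> cw_set t.
Proof.
move=> x0 sx tx; have c0 : 0 < (\sum_v x v)^-1 by rewrite invr_gt0.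
exists (fun v => (\sum_w x w)^-1 * x v).
  split=> [v|]; first by rewrite mulr_ge0 // ltW.
  by rewrite -mulr_sumr mulVf // gt_eqF.
by move=> v; rewrite mulvZ mulrCA ler_pM2l.
Qed.

Lemma cw_set0 : cw_set 0.
Proof.
apply: (@cw_set_scale (fun _ => 1)) => [v||v]; rewrite ?mul0r ?mulv_ge0 //.
exact: lt_le_trans _ (ler_sum_term (F := fun _ => 1) v0 _).
Qed.

Lemma cw_set_ub t : cw_set t -> t <= \sum_v \sum_w Q v w.
Proof.
case=> x sx tx; have [x0 _] := sx.
have [v _ vmax] := @arg_maxP _ _ _ v0 xpredT x isT.
have xv : 0 < x v := simplex_argmax_gt0 sx (fun w => vmax w isT).
have : t * x v <= (\sum_w Q v w) * x v.
  apply: le_trans (tx v) _; rewrite mulr_suml; apply: ler_sum => w _.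
  by apply: ler_wpM2l => //; apply: vmax.
rewrite ler_pM2r // => /le_trans; apply.
by apply: (ler_sum_term (F := fun v => \sum_w Q v w)) => u; rewrite sumr_ge0.
Qed.

Lemma has_sup_cw_set : has_sup cw_set.
Proof. by split; [exists 0; exact: cw_set0 | exists (\sum_v \sum_w Q v w) => t /cw_set_ub]. Qed.

Lemma pf_root_ge0 : 0 <= pf_root.
Proof. exact: (sup_upper_bound has_sup_cw_set cw_set0). Qed.

Lemma cw_set_gt x t : (forall v, 0 <= x v) -> 0 < \sum_v x v ->
  (forall v, t * x v < mulv Q x v) -> exists2 e, 0 < e & cw_set (t + e).
Proof.
move=> x0 sx tx; pose gap v := (mulv Q x v - t * x v) / (x v + 1).
have [v1 _ v1min] := @arg_minP _ _ _ v0 xpredT gap isT.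
have e0 : 0 < gap v1 by rewrite divr_gt0 ?subr_gt0 ?ltr_wpDl.
exists (gap v1) => //; apply: (cw_set_scale x0 sx) => v.
have := v1min v isT; rewrite ler_pdivlMr ?ltr_wpDl //.
move: (gap v1) e0 => e; lra.
Qed.

Lemma pf_root_attained : exists2 p, simplex p & forall v, pf_root * p v <= mulv Q p v.
Proof.
pose C e := [set x : V -> R | (forall v, 0 <= x v) /\
  (\sum_w x w = 1 /\ forall v, (pf_root - e) * x v <= mulv Q x v)].
have [p Cp] : exists p, forall e, 0 < e -> C e p.
  apply: (@compact_nested_meet R _ _ C (@compact_unit_cube R V))
    => [e e0|e e' e0 ee' x|e e0 x|e e0].
  - have [t [x [x0 x1] tx] lt_t] := sup_adherent e0 has_sup_cw_set.
    exists x; split=> //; split=> // v; apply: le_trans (tx v).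
    by rewrite ler_wpM2r // ltW.
  - case=> x0 [x1 xe]; split=> //; split=> // v; apply: le_trans (xe v).
    by rewrite ler_wpM2r // lerD2l lerN2.
  - by case=> x0 [x1 _] v; rewrite /= in_itv /= x0 simplex_le1.
  - apply: closedI.
      apply: closed_forall => v; apply: closed_fun_le; first exact: cst_continuous.
      exact: continuous_coord.
    apply: closedI; first exact/closed_fun_eq/continuous_sum.
    apply: closed_forall => v; apply: closed_fun_le; last exact: continuous_mulv.
    move=> x; apply: (continuousM (s := fun=> pf_root - e) (t := fun y : V -> R => y v)).
      exact: cst_continuous.
    exact: continuous_coord.
have [p0 [p1 _]] := Cp 1 ltr01.
exists p => // v; apply/ler_addgt0Pr => e e0; have [_ [_ pe]] := Cp e e0.
have : e * p v <= e by rewrite -[leRHS]mulr1 ler_pM2l // simplex_le1.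
by have := pe v; move: (p v) => pv; lra.
Qed.

Definition shift x : V -> R := fun v => x v + mulv Q x v.

Definition supp x : {set V} := [set v | 0 < x v].

Lemma shift_ge x v : (forall w, 0 <= x w) -> x v <= shift x v.
Proof. by move=> x0; rewrite lerDl mulv_ge0. Qed.

Lemma iter_shift_ge0 k x : (forall w, 0 <= x w) -> forall v, 0 <= iter k shift x v.
Proof.
elim: k => //= k IH x0 v; apply: le_trans (shift_ge _ (IH x0)); exact: IH.
Qed.

Lemma iter_shift_ge k x v : (forall w, 0 <= x w) -> x v <= iter k shift x v.
Proof.
move=> x0; elim: k => //= k IH; apply: le_trans IH _.
exact/shift_ge/iter_shift_ge0.
Qed.

Lemma supp_shift x : (forall w, 0 <= x w) -> supp x \subset supp (shift x).
Proof.
move=> x0; apply/fintype.subsetP => v; rewrite !inE => xv.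
exact: lt_le_trans xv (shift_ge _ x0).
Qed.

Lemma supp_shift_proper x : (forall w, 0 <= x w) ->
  supp x != finset.set0 -> supp x != [set: V]%SET -> supp x \proper supp (shift x).
Proof.
move=> x0 /set0Pn[w xw] nfull; rewrite properE supp_shift //=.
have /subsetPn[v _ xv] : ~~ ([set: V]%SET \subset supp x) by rewrite finset.subTset.
move: xw xv; rewrite !inE => xw xv.
have [u [u' [xu xu' Quu']]] := @Q_irr [pred v | ~~ (0 < x v)] v w xv (introT negPn xw).
apply/subsetPn; exists u; last by rewrite inE.
rewrite inE; apply: ltr_wpDl (x0 u) _.
apply: lt_le_trans _ (ler_sum_term (F := fun z => Q u z * x z) u' _).
  by rewrite mulr_gt0 //; move/negPn: xu'.
by move=> z; rewrite mulr_ge0.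
Qed.

Lemma iter_shift_gt0 x : (forall w, 0 <= x w) -> (exists v, 0 < x v) ->
  forall v, 0 < iter #|V| shift x v.
Proof.
move=> x0 [w xw].
have grow k : (minn k.+1 #|V| <= #|supp (iter k shift x)|)%N.
  elim: k => [|k IH].
    rewrite (leq_trans (geq_minl _ _)) // card_gt0.
    by apply/set0Pn; exists w; rewrite inE.
  change (minn k.+2 #|V| <= #|supp (shift (iter k shift x))|)%N.
  have y0 := iter_shift_ge0 k x0.
  have [full|nfull] := eqVneq (supp (iter k shift x)) [set: V]%SET.
    rewrite (leq_trans (geq_minr _ _)) // -[X in (X <= _)%N]cardsT -full.
    exact/subset_leq_card/supp_shift.
  have ne : supp (iter k shift x) != finset.set0.
    by apply/set0Pn; exists w; rewrite inE (lt_le_trans xw (iter_shift_ge _ _ x0)).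
  by have := proper_card (supp_shift_proper y0 ne nfull); lia.
have full : supp (iter #|V| shift x) = [set: V]%SET.
  apply/eqP; rewrite eqEcard finset.subsetT cardsT.
  by have := grow #|V|; rewrite (minn_idPr (leqnSn _)).
by move=> v; move/setP: full => /(_ v); rewrite !inE.
Qed.

Lemma shift_comm t x v :
  mulv Q (shift x) v - t * shift x v = shift (fun w => mulv Q x w - t * x w) v.
Proof. by rewrite /shift mulvD mulvB; ring. Qed.

Lemma iter_shift_comm t k x v :
  mulv Q (iter k shift x) v - t * iter k shift x v =
  iter k shift (fun w => mulv Q x w - t * x w) v.
Proof.
elim: k v => //= k IH v; rewrite shift_comm; congr (shift _ v).
by apply: funext => w; exact: IH.
Qed.

Lemma pf_root_eigenvector :
  exists2 p, simplex p & forall v, mulv Q p v = pf_root * p v.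
Proof.
have [p [p0 p1] pp] := pf_root_attained.
exists p => //; pose y v := mulv Q p v - pf_root * p v.
have y0 v : 0 <= y v by rewrite subr_ge0.
have [[v yv]|ny] := pselect (exists v, 0 < y v); last first.
  move=> v; apply/eqP; rewrite -subr_eq0 eq_le y0 andbT leNgt; apply/negP => yv.
  by apply: ny; exists v.
(* If the defect [y] is nonzero, (I + Q)^|V| makes it positive everywhere, so a
   slightly larger [t] than [pf_root] would be admissible. *)
have z0 := iter_shift_ge0 #|V| p0.
have [e e0] : exists2 e, 0 < e & cw_set (pf_root + e).
  apply: (cw_set_gt z0) => [|w].
    by rewrite (lt_le_trans ltr01) // -p1; apply: ler_sum => w _; exact: iter_shift_ge.
  by rewrite -subr_gt0 iter_shift_comm; exact: iter_shift_gt0 y0 (ex_intro _ v yv) w.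
move=> /(sup_upper_bound has_sup_cw_set); rewrite -/pf_root; lra.
Qed.

Theorem perron_frobenius : exists t phi, PF_eigenvalue Q t /\ PF_eigenvector Q t phi.
Proof.
have [p sp ep] := pf_root_eigenvector; have [p0 _] := sp.
have [v _ vmax] := @arg_maxP _ _ _ v0 xpredT p isT.
have pv := simplex_argmax_gt0 sp (fun w => vmax w isT).
have ppos := eigenvector_gt0 p0 (ex_intro _ v (lt0r_neq0 pv)) ep.
exists pf_root, p; split; last by split.
split; [exact: pf_root_ge0 | | by move=> a bb; apply: complex_eigenvalue_le ppos ep].
exists p, (fun _ => 0); split; first by exists v; rewrite gt_eqF.
by move=> w; rewrite ep /mulv big1 => [|u _]; rewrite ?mulr0 ?mul0r ?subr0 ?addr0.
Qed.

End PerronFrobenius.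

Lemma tsumE (R : realType) (T : choiceType) (F : T -> R) (r : seq T) :
  uniq r -> (forall t, t \notin r -> F t = 0) -> tsum F = \sum_(t <- r) F t.
Proof.
move=> ur Fr; rewrite /tsum (fsbigE r) //; last by move=> t _; apply: Fr.
by apply: eq_bigl => t; rewrite in_setT.
Qed.

Section InnerProduct.
Context (R : realType) (d : nat).
Implicit Types (a : 'rV[R]_d) (z : 'rV[int]_d).

Lemma ip0 a : ip a 0 = 0.
Proof. by rewrite /ip big1 // => i _; rewrite mxE mulr0. Qed.

Lemma ipD a z1 z2 : ip a (z1 + z2) = ip a z1 + ip a z2.
Proof. by rewrite /ip -big_split; apply: eq_bigr => i _; rewrite mxE intrD mulrDr. Qed.

Lemma ip_delta a i : ip a (delta_mx 0 i) = a 0 i.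
Proof.
rewrite /ip (bigD1 i) //= big1 => [|j ji]; first by rewrite mxE !eqxx mulr1z mulr1 addr0.
by rewrite mxE eqxx (negbTE ji) mulr0z mulr0.
Qed.

(* [ln \o gam] is additive on [Z^d], hence [Z]-linear, hence determined by
   its values on the unit vectors. *)
Lemma character_ln_linear (gam : 'rV[int]_d -> R) : is_character gam ->
  exists a, forall z, ln (gam z) = ip a z.
Proof.
move=> [gam0 gamD]; pose L z := ln (gam z).
have LD z1 z2 : L (z1 + z2) = L z1 + L z2 by rewrite /L gamD lnM // posrE.
have L0 : L 0 = 0 by have := LD 0 0; rewrite addr0; lra.
have LN z : L (- z) = - L z by have := LD z (- z); rewrite addrN L0; lra.
have LMn z n : L (z *+ n) = L z *+ n.
  by elim: n => [|n IH]; rewrite ?mulr0n // !mulrS LD IH.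
have LMz z k : L (z *~ k) = L z *~ k.
  by case: k => n; [rewrite -!pmulrn LMn | rewrite NegzE !mulrNz -!pmulrn LN LMn].
exists (\row_i L (delta_mx 0 i)) => z.
change (L z = ip (\row_i L (delta_mx 0 i)) z); rewrite {1}[z]row_sum_delta /ip.
have -> : L (\sum_(j < d) z 0 j *: delta_mx 0 j) = \sum_(j < d) L (z 0 j *: delta_mx 0 j).
  by elim/big_rec2: _ => [|j y1 y2 _ <-]; rewrite ?L0 ?LD.
apply: eq_bigr => j _; rewrite mxE mulrzr -LMz; congr (L _).
by rewrite -scaler_int intz.
Qed.

End InnerProduct.

Section PeriodicGraph.
Context (R : realType) (d : nat) (X : countType) (V : finType)
  (b : X -> X -> R) (c : X -> R) (act : 'rV[int]_d -> X -> X) (iota : V -> X).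
Hypotheses (b_ge0 : forall x y, 0 <= b x y) (b_lf : locally_finite b)
  (act_action : is_action act)
  (fundamental : forall x, exists! p : 'rV[int]_d * V, x = act p.1 (iota p.2))
  (H_inv : H_invariant b c act).

Lemma act0 x : act 0 x = x. Proof. by case: act_action. Qed.
Lemma actD z1 z2 x : act (z1 + z2) x = act z1 (act z2 x). Proof. by case: act_action. Qed.
Lemma actK z : cancel (act z) (act (- z)). Proof. by move=> x; rewrite -actD addNr act0. Qed.
Lemma actNK z : cancel (act (- z)) (act z). Proof. by move=> x; rewrite -actD addrN act0. Qed.

Lemma coords_spec x : exists p : 'rV[int]_d * V, x = act p.1 (iota p.2).
Proof. by have [p [px _]] := fundamental x; exists p. Qed.

Definition coords x : 'rV[int]_d * V := proj1_sig (cid (coords_spec x)).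

Lemma coordsK x : act (coords x).1 (iota (coords x).2) = x.
Proof. by rewrite /coords; case: cid. Qed.

Lemma coords_inj : injective coords.
Proof. by move=> x y e; rewrite -[LHS]coordsK -[RHS]coordsK e. Qed.

Lemma coords_act z v : coords (act z (iota v)) = (z, v).
Proof.
have [p [_ uniq_p]] := fundamental (act z (iota v)).
by rewrite -(uniq_p (z, v)) // -(uniq_p _ (esym (coordsK _))).
Qed.

Lemma coords_iota v : coords (iota v) = (0, v).
Proof. by rewrite -{1}[iota v]act0 coords_act. Qed.

Definition nbrs x : seq X := finmap.enum_fset (fset_set [set y | 0 < b x y]).

Lemma mem_nbrs x y : (y \in nbrs x) = (0 < b x y).
Proof. by rewrite /nbrs in_fset_set ?mem_setE //; exact: b_lf. Qed.

Lemma uniq_nbrs x : uniq (nbrs x).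
Proof. exact: finmap.fset_uniq. Qed.

Lemma b_notin_nbrs x y : y \notin nbrs x -> b x y = 0.
Proof. by rewrite mem_nbrs lt0r b_ge0 andbT negbK => /eqP. Qed.

Lemma tsum_nbrs x (G : X -> R) :
  tsum (fun y => b x y * G y) = \sum_(y <- nbrs x) b x y * G y.
Proof. by apply: tsumE (uniq_nbrs x) _ => y /b_notin_nbrs ->; rewrite mul0r. Qed.

Lemma degE x : deg b c x = \sum_(y <- nbrs x) b x y + c x.
Proof.
by rewrite /deg (tsumE (uniq_nbrs x)) // => y /b_notin_nbrs.
Qed.

Lemma HopE f x : Hop b c f x = \sum_(y <- nbrs x) b x y * (f x - f y) + c x * f x.
Proof. by rewrite /Hop tsum_nbrs. Qed.

Lemma Hop_indicator x y : x != y -> Hop b c (fun u => (u == y)%:R) x = - b x y.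
Proof.
move=> xy; rewrite /Hop (negbTE xy) mulr0 addr0 (@tsumE _ _ _ [:: y]) //.
  by rewrite big_seq1 eqxx sub0r mulrN1.
by move=> u; rewrite inE => /negbTE ->; rewrite subrr mulr0.
Qed.

(* The invariance of [H] is seen on indicator functions. *)
Lemma b_act g x y : x != y -> b (act g x) (act g y) = b x y.
Proof.
move=> xy; have := H_inv g (fun u => (u == y)%:R) (act g x).
rewrite /transl actK (Hop_indicator xy).
have -> : (fun u => (act (- g) u == y)%:R) = (fun u => (u == act g y)%:R :> R).
  by apply: funext => u; rewrite (can2_eq (actNK g) (actK g)).
by rewrite Hop_indicator ?(inj_eq (can_inj (actK g))) // => /oppr_inj.
Qed.

Lemma HopZ k f x : Hop b c (fun u => k * f u) x = k * Hop b c f x.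
Proof.
rewrite !HopE mulrDr mulr_sumr mulrCA; congr (_ + _).
by apply: eq_bigr => y _; rewrite -mulrBr mulrCA.
Qed.

Lemma Hop_multiplicative f gam : multiplicative_with act f gam ->
  forall z x, Hop b c f (act z x) = gam z * Hop b c f x.
Proof.
move=> [_ mf] z x; have := H_inv (- z) f x; rewrite /transl opprK => <-.
by rewrite -HopZ; congr Hop; apply: funext => u; rewrite mf.
Qed.

Definition exp_periodic (a : 'rV[R]_d) (psi : V -> R) (f : X -> R) : Prop :=
  forall z v, f (act z (iota v)) = expR (ip a z) * psi v.

Lemma exp_periodic_iota a psi f v : exp_periodic a psi f -> f (iota v) = psi v.
Proof. by move=> hf; rewrite -[iota v]act0 hf ip0 expR0 mul1r. Qed.

Section TwistedSums.
Variable a : 'rV[R]_d.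

Definition twisted_adj v w :=
  tsum (fun z : 'rV[int]_d => b (iota v) (act z (iota w)) * expR (ip a z)).

Definition shifts v w : seq 'rV[int]_d :=
  [seq (coords y).1 | y <- [seq y <- nbrs (iota v) | (coords y).2 == w]].

Lemma mem_shifts v w z : 0 < b (iota v) (act z (iota w)) -> z \in shifts v w.
Proof.
move=> bz; apply/mapP; exists (act z (iota w)); last by rewrite coords_act.
by rewrite mem_filter coords_act eqxx mem_nbrs.
Qed.

Lemma uniq_shifts v w : uniq (shifts v w).
Proof.
rewrite map_inj_in_uniq ?filter_uniq ?uniq_nbrs // => y1 y2.
rewrite !mem_filter => /andP[/eqP e1 _] /andP[/eqP e2 _] e.
apply: coords_inj.
by rewrite [coords y1]surjective_pairing [coords y2]surjective_pairing e e1 e2.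
Qed.

Lemma twisted_adjE v w :
  twisted_adj v w = \sum_(z <- shifts v w) b (iota v) (act z (iota w)) * expR (ip a z).
Proof.
apply: tsumE (uniq_shifts v w) _ => z nz.
suff -> : b (iota v) (act z (iota w)) = 0 by rewrite mul0r.
by apply/eqP; rewrite eq_le b_ge0 andbT leNgt; apply: contra nz; exact: mem_shifts.
Qed.

Lemma twisted_adj_ge0 v w : 0 <= twisted_adj v w.
Proof. by rewrite twisted_adjE sumr_ge0 // => z _; rewrite mulr_ge0 // ltW // expR_gt0. Qed.

Lemma twisted_adj_ge_term v w z : b (iota v) (act z (iota w)) * expR (ip a z) <= twisted_adj v w.
Proof.
have [bz|] := ltP 0 (b (iota v) (act z (iota w))); last first.
  by move=> bz; apply: le_trans (twisted_adj_ge0 v w); rewrite mulr_le0_ge0 // ltW // expR_gt0.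
rewrite twisted_adjE (bigD1_seq z) ?uniq_shifts ?mem_shifts //= lerDl sumr_ge0 // => y _.
by rewrite mulr_ge0 // ltW // expR_gt0.
Qed.

(* Grouping the neighbours [y = z w] of [v] according to their class [w]. *)
Lemma sum_nbrs_exp_periodic f psi v : exp_periodic a psi f ->
  \sum_(y <- nbrs (iota v)) b (iota v) y * f y = \sum_w twisted_adj v w * psi w.
Proof.
move=> hf.
have -> : \sum_(y <- nbrs (iota v)) b (iota v) y * f y =
    \sum_(y <- nbrs (iota v)) \sum_w ((coords y).2 == w)%:R * (b (iota v) y * f y).
  apply: eq_bigr => y _; rewrite (bigD1 (coords y).2) //= eqxx mul1r big1 ?addr0 //.
  by move=> w /negbTE; rewrite eq_sym => ->; rewrite mul0r.
rewrite exchange_big /=; apply: eq_bigr => w _.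
rewrite twisted_adjE mulr_suml big_map big_filter [RHS]big_mkcond /=.
apply: eq_bigr => y _; case: eqP => [e|]; last by rewrite mul0r.
by rewrite mul1r -mulrA -hf -e coordsK.
Qed.

End TwistedSums.

Local Notation Q := (Qmat b c act iota).
Local Notation MD := (maxdeg b c iota).

Lemma maxdeg_ge v : deg b c (iota v) <= MD.
Proof.
rewrite /maxdeg /=; apply: (le_bigmax_seq _ _ xpredT id) => //.
by apply: map_f; rewrite mem_enum.
Qed.

Lemma Qmat_ge0 a v w : 0 <= Q a v w.
Proof.
rewrite addr_ge0 ?twisted_adj_ge0 //.
by case: eqP => // _; rewrite subr_ge0 maxdeg_ge.
Qed.

Lemma mulv_Qmat a psi v :
  mulv (Q a) psi v = \sum_w twisted_adj a v w * psi w + (MD - deg b c (iota v)) * psi v.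
Proof.
rewrite /mulv /Qmat; under eq_bigr do rewrite mulrDl; rewrite big_split /=.
congr (_ + _); rewrite (bigD1 v) //= eqxx big1 ?addr0 // => w.
by rewrite eq_sym => /negbTE ->; rewrite mul0r.
Qed.

Lemma Hop_exp_periodic a psi f v : exp_periodic a psi f ->
  Hop b c f (iota v) = MD * psi v - mulv (Q a) psi v.
Proof.
move=> hf; rewrite HopE mulv_Qmat -(sum_nbrs_exp_periodic v hf) (exp_periodic_iota v hf).
have -> : \sum_(y <- nbrs (iota v)) b (iota v) y * (psi v - f y) =
    (\sum_(y <- nbrs (iota v)) b (iota v) y) * psi v -
    \sum_(y <- nbrs (iota v)) b (iota v) y * f y.
  by rewrite mulr_suml -sumrB; apply: eq_bigr => y _; rewrite mulrBr.
rewrite degE; ring.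
Qed.

Lemma path_exit (S : pred V) x s : path (fun u w => 0 < b u w) x s ->
  S (coords x).2 -> ~~ S (coords (last x s)).2 ->
  exists x' y', [/\ 0 < b x' y', S (coords x').2 & ~~ S (coords y').2].
Proof.
elim: s x => [|y s IH] x /=; first by move=> _ ->.
move=> /andP[bxy p] Sx; case: (boolP (S (coords y).2)) => Sy; first exact: IH.
by move=> _; exists x, y.
Qed.

Lemma Qmat_irreducible a : graph_connected b -> irreducible (Q a).
Proof.
move=> conn S v w Sv Sw; have [s /andP[p /eqP l]] := conn (iota v) (iota w).
have := @path_exit S (iota v) s p; rewrite l !coords_iota => /(_ Sv Sw).
move=> [x [y [bxy Sx Sy]]].
exists (coords x).2, (coords y).2; split=> //.
have uu : (coords x).2 != (coords y).2 by apply: contraNneq Sy => <-.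
rewrite /Qmat (negbTE uu) addr0.
apply: lt_le_trans _ (twisted_adj_ge_term _ _ _ (- (coords x).1 + (coords y).1)).
rewrite mulr_gt0 ?expR_gt0 // actD -{1}[iota (coords x).2](actK (coords x).1).
by rewrite !coordsK b_act //; apply: contraNneq uu => ->.
Qed.

Lemma Kset_ge0 x0 lam f : Kset b c x0 lam f -> forall x, 0 <= f x.
Proof.
move=> K x; rewrite leNgt; apply/negP => fx.
have [|g [[g0 _ _ _] close]] := K [:: x] (- f x); first by rewrite oppr_gt0.
have := close x (mem_head _ _); have := ler_norm (g x - f x); have := g0 x; lra.
Qed.

Lemma Kset_x0 x0 lam f : Kset b c x0 lam f -> f x0 = 1.
Proof.
move=> K; apply/eqP; rewrite -subr_eq0 -normr_le0; apply/ler_addgt0Pr => e e0.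
have [g [[_ _ _ g1] close]] := K [:: x0] e e0.
by have := close x0 (mem_head _ _); rewrite g1 add0r distrC => /ltW.
Qed.

Lemma harmonic_defect_le lam f g x e : Defs.harmonic b c lam g ->
  `|f x - g x| <= e -> (forall y, y \in nbrs x -> `|f y - g y| <= e) ->
  `|Hop b c f x - lam * f x| <=
    (\sum_(y <- nbrs x) b x y * 2 + `|c x| + `|lam|) * e.
Proof.
move=> hg dx dy.
have -> : Hop b c f x - lam * f x =
    \sum_(y <- nbrs x) b x y * ((f x - g x) - (f y - g y)) + (c x - lam) * (f x - g x).
  have hgx := hg x; rewrite HopE in hgx.
  rewrite HopE -[LHS]subr0 -[X in _ - X = _]hgx.
  have -> : \sum_(y <- nbrs x) b x y * ((f x - g x) - (f y - g y)) =
      \sum_(y <- nbrs x) b x y * (f x - f y) - \sum_(y <- nbrs x) b x y * (g x - g y).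
    by rewrite -sumrB; apply: eq_bigr => y _; rewrite -mulrBr; congr (_ * _); ring.
  ring.
rewrite -[in X in _ <= X]addrA [in X in _ <= X]mulrDl.
apply: le_trans (ler_normD _ _) (lerD _ _).
  apply: le_trans (ler_norm_sum _ _ _) _; rewrite mulr_suml big_seq [leRHS]big_seq.
  apply: ler_sum => y yx; rewrite normrM ger0_norm // -mulrA ler_wpM2l //.
  by apply: le_trans (ler_normB _ _) _; have := dy y yx; lra.
by rewrite normrM; apply: ler_pM; rewrite ?normr_ge0 ?ler_normB.
Qed.

(* Harmonicity at [x] only involves the finitely many values on [x :: nbrs x],
   hence survives pointwise limits. *)
Lemma Kset_harmonic x0 lam f : Kset b c x0 lam f -> Defs.harmonic b c lam f.
Proof.
move=> K x; apply/eqP; rewrite -normr_le0; apply/ler_addgt0Pr => eps eps0.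
rewrite add0r; set C := \sum_(y <- nbrs x) b x y * 2 + `|c x| + `|lam|.
have C0 : 0 <= C by rewrite !addr_ge0 ?normr_ge0 // sumr_ge0 // => y _; rewrite mulr_ge0.
have C1 : 0 < C + 1 by rewrite ltr_wpDl.
have [|g [[_ _ hg _] close]] := K (x :: nbrs x) (eps / (C + 1)); first by rewrite divr_gt0.
apply: le_trans (harmonic_defect_le (e := eps / (C + 1)) hg _ _) _.
- by rewrite distrC ltW // close // mem_head.
- by move=> y yx; rewrite distrC ltW // close // in_cons yx orbT.
rewrite mulrCA; apply: ler_piMr; first exact: ltW.
by rewrite ler_pdivrMr // mul1r lerDl ler01.
Qed.

Lemma exp_periodic_of_rho f gam a : multiplicative_with act f gam ->
  (forall z, ln (gam z) = ip a z) -> exp_periodic a (fun v => f (iota v)) f.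
Proof. by move=> [[gam0 _] mf] lg z v; rewrite mf -lg lnK // posrE. Qed.

Lemma harmonic_exp_periodic_eigen lam f a psi : exp_periodic a psi f ->
  Defs.harmonic b c lam f -> forall v, mulv (Q a) psi v = (MD - lam) * psi v.
Proof.
move=> hf hh v; have := hh (iota v).
by rewrite (Hop_exp_periodic v hf) (exp_periodic_iota v hf); lra.
Qed.

Variable x0 : X.
Hypothesis b_connected : graph_connected b.

Lemma MRset_exp_periodic f a : MRset b c act x0 f -> rho_is act f a ->
  [/\ exp_periodic a (fun v => f (iota v)) f, forall v, 0 < f (iota v) &
      exists mu, forall v, mulv (Q a) (fun w => f (iota w)) v = mu * f (iota v)].
Proof.
move=> [lam [K _]] [gam [mg lg]]; have hf := exp_periodic_of_rho mg lg.
have eig := harmonic_exp_periodic_eigen hf (Kset_harmonic K).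
split=> //; last by exists (MD - lam).
apply: (eigenvector_gt0 (@Qmat_ge0 a) (Qmat_irreducible a b_connected) _ _ eig).
  by move=> v; exact: Kset_ge0 K _.
exists (coords x0).2; apply/eqP => f0.
by move: (Kset_x0 K); rewrite -(coordsK x0) hf /= f0 mulr0 => /eqP; rewrite eq_sym oner_eq0.
Qed.

Lemma MRset_rho_unique f : MRset b c act x0 f -> exists! a, rho_is act f a.
Proof.
move=> [lam [K [gam mg]]]; have [a la] := character_ln_linear (proj1 mg).
exists a; split; first by exists gam.
move=> a' [gam' [mg' la']]; apply/rowP => i.
have gam_eq z : gam z = gam' z.
  by have := proj2 mg z x0; have := proj2 mg' z x0; rewrite (Kset_x0 K) !mulr1 => <-.
by rewrite -ip_delta -(ip_delta a') -la -la' gam_eq.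
Qed.

Lemma MRset_rho_inj f g a : MRset b c act x0 f -> MRset b c act x0 g ->
  rho_is act f a -> rho_is act g a -> f = g.
Proof.
move=> MRf MRg rf rg.
have [hf fpos [muf ef]] := MRset_exp_periodic MRf rf.
have [hg gpos [mug eg]] := MRset_exp_periodic MRg rg.
have [_ [k _ gk]] := positive_eigenvector_unique (@Qmat_ge0 a)
  (Qmat_irreducible a b_connected) (coords x0).2 fpos ef gpos eg.
have gf x : g x = k * f x.
  by rewrite -(coordsK x) hf hg /= [g _]gk mulrCA.
have [[? [Kf _]] [? [Kg _]]] := (MRf, MRg).
have k1 : k = 1 by have := gf x0; rewrite (Kset_x0 Kf) (Kset_x0 Kg) mulr1.
by apply: funext => x; rewrite gf k1 mul1r.
Qed.

Lemma pf_normalised a : exists th (phi : V -> R),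
  [/\ PF_eigenvalue (Q a) th, PF_eigenvector (Q a) th phi &
      exists z v, x0 = act z (iota v) /\ expR (ip a z) * phi v = 1].
Proof.
have [th [phi [PFv [phi0 ephi]]]] :=
  perron_frobenius (@Qmat_ge0 a) (Qmat_irreducible a b_connected) (coords x0).2.
pose k := (expR (ip a (coords x0).1) * phi (coords x0).2)^-1.
have k0 : 0 < k by rewrite invr_gt0 mulr_gt0 ?expR_gt0.
exists th, (fun v => k * phi v); split=> //.
  by split=> v; rewrite ?mulr_gt0 // mulvZ ephi mulrCA.
exists (coords x0).1, (coords x0).2; split; first by rewrite coordsK.
by rewrite mulrCA mulVf // gt_eqF // mulr_gt0 ?expR_gt0.
Qed.

Lemma Mset_of_pf a th phi f : PF_eigenvector (Q a) th phi ->
  exp_periodic a phi f -> f x0 = 1 -> Mset b c act x0 (MD - th) f /\ rho_is act f a.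
Proof.
move=> [phi0 ephi] hf f1; pose gam z := expR (ip a z).
have mg : multiplicative_with act f gam.
  split; first by split=> [z|z1 z2]; rewrite /gam ?expR_gt0 // ipD expRD.
  by move=> z x; rewrite -(coordsK x) -actD !hf /gam ipD expRD mulrA.
have f0 x : 0 <= f x by rewrite -(coordsK x) hf mulr_ge0 // ltW ?expR_gt0.
have fh : Defs.harmonic b c (MD - th) f.
  move=> x; rewrite -(coordsK x) (Hop_multiplicative mg) (Hop_exp_periodic _ hf).
  by rewrite hf ephi /gam; ring.
split; last by exists gam; split=> // z; rewrite /gam expRK.
split; last by exists gam.
move=> F e e0; exists f; split; last by move=> x _; rewrite subrr normr0.
by split=> //; exists x0; rewrite f1 oner_neq0.
Qed.

Lemma MRset_rho_surj a : exists f, MRset b c act x0 f /\ rho_is act f a.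
Proof.
have [th [phi [_ PFe [z [v [ex0 n1]]]]]] := pf_normalised a.
pose f x := expR (ip a (coords x).1) * phi (coords x).2.
have hf : exp_periodic a phi f by move=> z' v'; rewrite /f coords_act.
have [Mf rf] := Mset_of_pf PFe hf (etrans (congr1 f ex0) (etrans (hf z v) n1)).
by exists f; split=> //; exists (MD - th).
Qed.

End PeriodicGraph.

Theorem lemma12 (R : realType) (d : nat) (X : countType) (V : finType)
  (b : X -> X -> R) (c : X -> R) (act : 'rV[int]_d -> X -> X) (iota : V -> X) (x0 : X) :
  (forall x y, 0 <= b x y) ->
  locally_finite b -> graph_connected b ->
  is_action act ->
  (forall x, exists! p : 'rV[int]_d * V, x = act p.1 (iota p.2)) ->
  H_invariant b c act ->
  let MR := MRset b c act x0 in
  let Q := Qmat b c act iota in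
  [/\ (forall f, MR f -> exists! a : 'rV[R]_d, rho_is act f a),
      (forall f g (a : 'rV[R]_d), MR f -> MR g -> rho_is act f a -> rho_is act g a -> f = g),
      (forall a : 'rV[R]_d, exists f, MR f /\ rho_is act f a),
      (forall a : 'rV[R]_d, exists th (phi : V -> R),
          [/\ PF_eigenvalue (Q a) th, PF_eigenvector (Q a) th phi &
              exists z v, x0 = act z (iota v) /\ expR (ip a z) * phi v = 1]) &
      (forall (a : 'rV[R]_d) (th : R) (phi : V -> R) (f : X -> R),
          PF_eigenvalue (Q a) th -> PF_eigenvector (Q a) th phi ->
          (forall z v, f (act z (iota v)) = expR (ip a z) * phi v) ->
          f x0 = 1 ->
          Mset b c act x0 (maxdeg b c iota - th) f /\ rho_is act f a)].
Proof.
move=> b_ge0 b_lf b_connected act_action fundamental H_inv MR Q; split.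
- exact: MRset_rho_unique.
- exact: MRset_rho_inj.
- exact: MRset_rho_surj.
- exact: pf_normalised.
- by move=> a th phi f _; apply: Mset_of_pf.
Qed.
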